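(* Let $\mathcal{G}=sl(2,\mathbb{R})$ be the real Lie algebra with basis $X_1,X_2,X_3$ and brackets $[X_1,X_2]=-X_3$, $[X_2,X_3]=X_1$, $[X_3,X_1]=X_2$ (Bianchi type $VIII$). Every real Manin triple $(\mathcal{D},\mathcal{G}',\tilde{\mathcal{G}}')$ with $\mathcal{G}'\cong\mathcal{G}$ is isomorphic to exactly one Manin triple $(\mathcal{D},\mathcal{G},\tilde{\mathcal{G}})$ in which $\tilde{\mathcal{G}}$, in the basis $\tilde X^1,\tilde X^2,\tilde X^3$ dual to $X_1,X_2,X_3$, has one of the following bracket structures: (a) (Bianchi $I$) all brackets zero; (b) (Bianchi $V$) (i) $[\tilde X^1,\tilde X^2]=-b\tilde X^2$, $[\tilde X^2,\tilde X^3]=0$, $[\tilde X^3,\tilde X^1]=b\tilde X^3$, $b>0$; (ii) $[\tilde X^1,\tilde X^2]=0$, $[\tilde X^2,\tilde X^3]=b\tilde X^2$, $[\tilde X^3,\tilde X^1]=-b\tilde X^1$, $b>0$; (iii) $[\tilde X^1,\tilde X^2]=\tilde X^2$, $[\tilde X^2,\tilde X^3]=\tilde X^2$, $[\tilde X^3,\tilde X^1]=-(\tilde X^1+\tilde X^3)$.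
   Context: A real Manin triple $(\mathcal{D},\mathcal{G},\tilde{\mathcal{G}})$ consists of a real Lie algebra $\mathcal{D}$ with a symmetric, ad-invariant, nondegenerate bilinear form $\langle\cdot,\cdot\rangle$, and two maximally isotropic Lie subalgebras $\mathcal{G},\tilde{\mathcal{G}}$ with $\mathcal{D}=\mathcal{G}\oplus\tilde{\mathcal{G}}$ as vector spaces; here $\dim\mathcal{D}=6$, $\dim\mathcal{G}=\dim\tilde{\mathcal{G}}=3$. Bases $X_i$ of $\mathcal{G}$ and $\tilde X^i$ of $\tilde{\mathcal{G}}$ are dual if $\langle X_i,X_j\rangle=0$, $\langle X_i,\tilde X^j\rangle=\delta_i^j$, $\langle\tilde X^i,\tilde X^j\rangle=0$. If $[X_i,X_j]=f_{ij}{}^kX_k$ and $[\tilde X^i,\tilde X^j]=\tilde f^{ij}{}_k\tilde X^k$, ad-invariance forces $[X_i,\tilde X^j]=f_{ki}{}^j\tilde X^k+\tilde f^{jk}{}_iX_k$, so the triple is determined by the brackets of $\mathcal{G}$ and $\tilde{\mathcal{G}}$ in dual bases. Two Manin triples are isomorphic if there is a Lie algebra isomorphism of the doubles preserving the bilinear forms and mapping first subalgebra to first subalgebra and second to second; equivalently, they are related by a change of basis $X_i'=X_kA^k{}_i$, $\tilde X'^j=(A^{-1})^j{}_k\tilde X^k$. Different values of the parameter $b$ give non-isomorphic triples. *)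

From HB Require Import structures.
From mathcomp Require Import all_boot all_order all_algebra.
From mathcomp Require Import reals.
Set Implicit Arguments. Unset Strict Implicit. Unset Printing Implicit Defensive.
Import Order.TTheory GRing.Theory Num.Theory.
Local Open Scope ring_scope.

(* Structure constants of a 3-dim Lie algebra in a basis e_0,e_1,e_2:
   sc i j k = f_{ij}^k, i.e. [e_i, e_j] = \sum_k sc i j k e_k. *)
Definition sconst (R : Type) := 'I_3 -> 'I_3 -> 'I_3 -> R.

Definition vec3 (R : Type) (a b c : R) (k : 'I_3) : R :=
  match val k with 0 => a | 1 => b | _ => c end.

(* Antisymmetric structure constants given [e1,e2] = u, [e2,e3] = v,
   [e3,e1] = w (u v w coordinate vectors; paper's indices 1,2,3 are 0,1,2). *)
Definition br3 (R : realType) (u v w : 'I_3 -> R) : sconst R :=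
  fun i j k =>
    match val i, val j with
    | 0, 1 => u k | 1, 0 => - u k
    | 1, 2 => v k | 2, 1 => - v k
    | 2, 0 => w k | 0, 2 => - w k
    | _, _ => 0
    end.

Definition sl2 (R : realType) : sconst R :=
  br3 (vec3 0 0 (-1)) (vec3 1 0 0) (vec3 0 1 0).

(* Basis of the double D: inl i = X_i, inr i = tilde X^i.
   Brackets: [X_i,X_j] = f_ij^k X_k, [tX^i,tX^j] = tf^ij_k tX^k,
   [X_i,tX^j] = f_ki^j tX^k + tf^jk_i X_k, [tX^j, X_i] = -[X_i, tX^j]. *)
Definition dconst (R : realType) (f tf : sconst R)
  (a b c : 'I_3 + 'I_3) : R :=
  match a, b, c with
  | inl i, inl j, inl k => f i j k
  | inl _, inl _, inr _ => 0
  | inr i, inr j, inr k => tf i j k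
  | inr _, inr _, inl _ => 0
  | inl i, inr j, inr k => f k i j
  | inl i, inr j, inl k => tf j k i
  | inr j, inl i, inr k => - f k i j
  | inr j, inl i, inl k => - tf j k i
  end.

Definition is_lie (I : finType) (R : realType) (c : I -> I -> I -> R) : Prop :=
  (forall a d, c a a d = 0) /\
  (forall a b d, c a b d = - c b a d) /\
  (forall a b g d,
     \sum_(e : I) (c a b e * c e g d + c b g e * c e a d + c g a e * c e b d)
     = 0).

Definition dform (R : realType) (a b : 'I_3 + 'I_3) : R :=
  match a, b with
  | inl i, inr j | inr i, inl j => (i == j)%:R
  | _, _ => 0
  end.

Definition ad_invariant (I : finType) (R : realType)
  (c : I -> I -> I -> R) (B : I -> I -> R) : Prop :=
  forall a b d, \sum_(e : I) c a b e * B e d = \sum_(e : I) B a e * c b d e.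

(* A real Manin triple (D, G, tG) presented in dual bases by the structure
   constants f of G and tf of tG: D with the bracket above is a Lie algebra
   and the canonical form is ad-invariant (the form is automatically
   symmetric and nondegenerate, and G, tG maximally isotropic). *)
Definition manin (R : realType) (f tf : sconst R) : Prop :=
  is_lie (dconst f tf) /\ ad_invariant (dconst f tf) (@dform R).

(* Change of basis X'_i = X_k A^k_i (A k i = A^k_i) on structure constants. *)
Definition cb (R : realType) (f : sconst R) (A : 'M[R]_3) : sconst R :=
  fun i j n => \sum_(k < 3) \sum_(l < 3) \sum_(m < 3)
                 A k i * A l j * f k l m * invmx A n m.

(* Isomorphism of Manin triples: X'_i = X_k A^k_i, tX'^j = (A^-1)^j_k tX^k. *)
Definition mt_iso (R : realType) (f1 tf1 f2 tf2 : sconst R) : Prop :=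
  exists A : 'M[R]_3, A \in unitmx /\
    cb f1 A = f2 /\ cb tf1 (invmx A)^T = tf2.

Definition lie_iso (R : realType) (f1 f2 : sconst R) : Prop :=
  exists A : 'M[R]_3, A \in unitmx /\ cb f1 A = f2.

Definition tfI (R : realType) : sconst R :=
  br3 (vec3 0 0 0) (vec3 0 0 0) (vec3 0 0 0).
Definition tfVi (R : realType) (b : R) : sconst R :=
  br3 (vec3 0 (- b) 0) (vec3 0 0 0) (vec3 0 0 b).
Definition tfVii (R : realType) (b : R) : sconst R :=
  br3 (vec3 0 0 0) (vec3 0 b 0) (vec3 (- b) 0 0).
Definition tfViii (R : realType) : sconst R :=
  br3 (vec3 0 1 0) (vec3 0 1 0) (vec3 (-1) 0 (-1)).

Definition listed (R : realType) (tf : sconst R) : Prop :=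
  tf = tfI R \/
  (exists b : R, 0 < b /\ tf = tfVi b) \/
  (exists b : R, 0 < b /\ tf = tfVii b) \/
  tf = tfViii R.

(* For sl(2,R) the mixed Jacobi identities of the double force the dual bracket
   to be of Bianchi class B, determined by its trace vector t, whose entries are
   t_j = tr (x |-> [x, X^j]).  An isomorphism of Manin triples fixing sl(2,R) is
   an automorphism B of sl(2,R), and it acts on t by B^-1.  Rotations in the
   (X1,X2)-plane, boosts in the (X1,X3)-plane and diag(1,-1,-1) are automorphisms,
   and they bring t to 0, (2b,0,0), (0,0,2b) or (-2,0,2) according as t is zero,
   spacelike, timelike or null for the Killing form diag(2,2,-2): these are the
   duals I, V(i), V(ii) and V(iii).  Conversely, the Killing norm of t and the
   vanishing of t are invariants of Manin triple isomorphisms, and they separate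
   the four normal forms. *)

From mathcomp Require Import all_boot all_order all_algebra.
From mathcomp Require Import reals.
From mathcomp Require boolp.
From mathcomp Require Import ring lra.
Import Order.TTheory GRing.Theory Num.Theory.
Local Open Scope ring_scope.
Set Implicit Arguments. Unset Strict Implicit. Unset Printing Implicit Defensive.

Lemma sconst_ext (R : Type) (f g : sconst R) :
  (forall i j k, f i j k = g i j k) -> f = g.
Proof.
by move=> fg; apply: boolp.funext => i; apply: boolp.funext => j; apply: boolp.funext.
Qed.

Section Sums.
Variables (R : comPzRingType) (I : finType).
Implicit Types (F : I -> R) (d : I).

Lemma sum_mul_eqr F d : \sum_e F e * (e == d)%:R = F d.
Proof.
rewrite (bigD1 d) //= eqxx mulr1 big1 ?addr0 // => e /negPf->; exact: mulr0.
Qed.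

Lemma sum_mul_eql F d : \sum_e F e * (d == e)%:R = F d.
Proof. by under eq_bigr => e _ do rewrite eq_sym; exact: sum_mul_eqr. Qed.

Lemma sum_eql_mul F d : \sum_e (d == e)%:R * F e = F d.
Proof. by under eq_bigr => e _ do rewrite mulrC; exact: sum_mul_eql. Qed.

Lemma exchange_big3 (F : I -> I -> I -> R) :
  \sum_x \sum_y \sum_z F x y z = \sum_z \sum_x \sum_y F x y z.
Proof.
rewrite [RHS]exchange_big /=; apply: eq_bigr => x _; exact: exchange_big.
Qed.

End Sums.

Lemma sum_mulmxV (R : comUnitRingType) n (A : 'M[R]_n) x y : A \in unitmx ->
  \sum_e A x e * invmx A e y = (x == y)%:R.
Proof.
by move=> uA; have := congr1 (fun M : 'M[R]_n => M x y) (mulmxV uA); rewrite !mxE.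
Qed.

Lemma sum_mulVmx (R : comUnitRingType) n (A : 'M[R]_n) x y : A \in unitmx ->
  \sum_e invmx A x e * A e y = (x == y)%:R.
Proof.
by move=> uA; have := congr1 (fun M : 'M[R]_n => M x y) (mulVmx uA); rewrite !mxE.
Qed.

Section Transport.
Variables (R : realType) (I : finType) (c : I -> I -> I -> R) (P Q : I -> I -> R).

(* Structure constants in the basis [X'_a = \sum_k P k a X_k], where [Q] is
   the inverse of [P]. *)
Definition transport a b n := \sum_k \sum_l \sum_m P k a * P l b * c k l m * Q n m.

Lemma transport_antisym : (forall a b d, c a b d = - c b a d) ->
  forall a b d, transport a b d = - transport b a d.
Proof.
move=> c_anti a b d; rewrite /transport exchange_big /= -sumrN; apply: eq_bigr => l _.
rewrite -sumrN; apply: eq_bigr => k _; rewrite -sumrN; apply: eq_bigr => m _.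
by rewrite c_anti; ring.
Qed.

Hypothesis PQ : forall x y, \sum_e P x e * Q e y = (x == y)%:R.

Lemma transport_mul a b g d :
  \sum_e transport a b e * transport e g d =
  \sum_x \sum_y \sum_z \sum_w P x a * P y b * P z g * Q d w * (\sum_m c x y m * c m z w).
Proof.
pose U m := \sum_x \sum_y P x a * P y b * c x y m.
pose V k := \sum_z \sum_w P z g * c k z w * Q d w.
have Tl e : transport a b e = \sum_m U m * Q e m.
  rewrite /transport exchange_big3; apply: eq_bigr => m _; rewrite mulr_suml.
  by apply: eq_bigr => x _; rewrite mulr_suml; apply: eq_bigr => y _; ring.
have Tr e : transport e g d = \sum_k P k e * V k.
  rewrite /transport; apply: eq_bigr => k _; rewrite mulr_sumr; apply: eq_bigr => z _.
  by rewrite mulr_sumr; apply: eq_bigr => w _; ring.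
transitivity (\sum_m U m * V m).
  under eq_bigr => e _ do rewrite Tl Tr mulr_suml.
  rewrite exchange_big /=; apply: eq_bigr => m _.
  rewrite -[RHS](sum_mul_eqr (fun k => U m * V k)) /=.
  under eq_bigr => e _ do rewrite mulr_sumr.
  rewrite exchange_big /=; apply: eq_bigr => k _.
  by rewrite -PQ mulr_sumr; apply: eq_bigr => e _; ring.
transitivity (\sum_m \sum_x \sum_y \sum_z \sum_w
    P x a * P y b * P z g * Q d w * (c x y m * c m z w)).
  apply: eq_bigr => m _; rewrite mulr_suml; apply: eq_bigr => x _.
  rewrite mulr_suml; apply: eq_bigr => y _; rewrite mulr_sumr; apply: eq_bigr => z _.
  by rewrite mulr_sumr; apply: eq_bigr => w _; ring.
rewrite exchange_big; apply: eq_bigr => x _; rewrite exchange_big; apply: eq_bigr => y _.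
rewrite exchange_big; apply: eq_bigr => z _; rewrite exchange_big; apply: eq_bigr => w _.
by rewrite mulr_sumr.
Qed.

Lemma is_lie_transport : is_lie c -> is_lie transport.
Proof.
move=> [_ [c_anti c_jacobi]].
have T_anti := transport_antisym c_anti.
split; first by move=> a d; have := T_anti a a d; lra.
split=> // a b g d.
have cyc (F : I -> I -> I -> I -> R) :
    \sum_x \sum_y \sum_z \sum_w F x y z w = \sum_x \sum_y \sum_z \sum_w F y z x w.
  exact: (exchange_big3 (fun x y z => \sum_w F x y z w)).
rewrite !big_split /= !transport_mul [X in _ + X + _]cyc [X in _ + X]cyc [X in _ + X]cyc.
rewrite -!big_split /=; apply: big1 => x _; rewrite -!big_split /=; apply: big1 => y _.
rewrite -!big_split /=; apply: big1 => z _; rewrite -!big_split /=; apply: big1 => w _.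
have := c_jacobi x y z w; rewrite !big_split /= => jac.
transitivity (P x a * P y b * P z g * Q d w *
  (\sum_m c x y m * c m z w + \sum_m c y z m * c m x w + \sum_m c z x m * c m y w)).
  ring.
by rewrite jac mulr0.
Qed.

End Transport.

Definition i0 : 'I_3 := @Ordinal 3 0 isT.
Definition i1 : 'I_3 := @Ordinal 3 1 isT.
Definition i2 : 'I_3 := @Ordinal 3 2 isT.

Lemma forall_ord3 (P : 'I_3 -> Prop) : P i0 -> P i1 -> P i2 -> forall i, P i.
Proof.
move=> P0 P1 P2 [[|[|[|n]]] lt_n3] //.
- by rewrite (_ : Ordinal _ = i0) //; apply: val_inj.
- by rewrite (_ : Ordinal _ = i1) //; apply: val_inj.
- by rewrite (_ : Ordinal _ = i2) //; apply: val_inj.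
Qed.

Lemma sum3 (R : nmodType) (F : 'I_3 -> R) : \sum_(i < 3) F i = F i0 + F i1 + F i2.
Proof.
rewrite !big_ord_recr big_ord0 /=.
congr (_ + F _ + F _); [rewrite add0r; congr F|..]; exact: val_inj.
Qed.

Ltac expand_sums := do 10 (rewrite ?sum3 ?mxE /=; try rewrite /mxtrace).

Section DoubleChangeOfBasis.
Variable R : realType.
Implicit Types (f g tf : sconst R) (A B : 'M[R]_3).

Definition dblock n (A D : 'M[R]_n) (x y : 'I_n + 'I_n) : R :=
  match x, y with inl i, inl j => A i j | inr i, inr j => D i j | _, _ => 0 end.

Lemma sum_dblock_mulV n (A D : 'M[R]_n) x y : A \in unitmx -> D \in unitmx ->
  \sum_e dblock A D x e * dblock (invmx A) (invmx D) e y = (x == y)%:R.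
Proof.
move=> uA uD; case: x => i; case: y => j; rewrite big_sumType /=.
- by rewrite sum_mulmxV // big1 ?addr0 // => e _; rewrite mulr0.
- by rewrite !big1 ?addr0 // => e _; rewrite (mulr0, mul0r).
- by rewrite !big1 ?addr0 // => e _; rewrite (mulr0, mul0r).
- by rewrite sum_mulmxV // big1 ?add0r // => e _; rewrite mul0r.
Qed.

Lemma sum_dblockl (G : 'I_3 + 'I_3 -> R) A D a :
  \sum_k dblock A D k a * G k =
  match a with inl i => \sum_k A k i * G (inl k) | inr i => \sum_k D k i * G (inr k) end.
Proof.
case: a => i; rewrite big_sumType /=.
  by rewrite [X in _ + X]big1 ?addr0 // => k _; rewrite mul0r.
by rewrite big1 ?add0r // => k _; rewrite mul0r.
Qed.

Lemma sum_dblockr (G : 'I_3 + 'I_3 -> R) A D n :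
  \sum_m G m * dblock A D n m =
  match n with inl i => \sum_m G (inl m) * A i m | inr i => \sum_m G (inr m) * D i m end.
Proof.
case: n => i; rewrite big_sumType /=.
  by rewrite [X in _ + X]big1 ?addr0 // => k _; rewrite mulr0.
by rewrite big1 ?add0r // => k _; rewrite mulr0.
Qed.

Lemma transport_dconst f tf A :
  transport (dconst f tf) (dblock A (invmx A)^T) (dblock (invmx A) A^T) =
  dconst (cb f A) (cb tf (invmx A)^T).
Proof.
have nested c P Q a b n :
    transport c P Q a b n = \sum_k P k a * \sum_l P l b * \sum_m c k l m * Q n m.
  rewrite /transport; apply: eq_bigr => k _; rewrite mulr_sumr; apply: eq_bigr => l _.
  by rewrite !mulr_sumr; apply: eq_bigr => m _; ring.
have invAT : invmx (invmx A)^T = A^T by rewrite trmx_inv invmxK.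
apply: boolp.funext => a; apply: boolp.funext => b; apply: boolp.funext => n.
rewrite nested sum_dblockl; case: a => a; rewrite /= sum3 !sum_dblockl;
case: b => b; rewrite /= !sum3 !sum_dblockr;
case: n => n; rewrite /= /cb ?invAT; do 3 (rewrite ?sum3 /=); rewrite ?mxE; ring.
Qed.

End DoubleChangeOfBasis.

Section MtIso.
Variable R : realType.
Implicit Types (f g h tf tg : sconst R) (A B : 'M[R]_3).

Lemma is_lie_dconst_cb f tf A : A \in unitmx ->
  is_lie (dconst f tf) -> is_lie (dconst (cb f A) (cb tf (invmx A)^T)).
Proof.
move=> uA; rewrite -transport_dconst; apply: is_lie_transport => x y.
have uAT : (invmx A)^T \in unitmx by rewrite unitmx_tr unitmx_inv.
have invAT : A^T = invmx (invmx A)^T by rewrite trmx_inv invmxK.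
by rewrite [X in dblock (invmx A) X]invAT sum_dblock_mulV.
Qed.

Lemma manin_iso_is_lie f tf g tg :
  mt_iso f tf g tg -> is_lie (dconst f tf) -> is_lie (dconst g tg).
Proof. by move=> [A [uA [<- <-]]]; apply: is_lie_dconst_cb. Qed.

(* [cb_rel f B g] is [cb f B = g] with the inverse of [B] multiplied out. *)
Definition cb_rel f B g :=
  forall i j m, \sum_k \sum_l B k i * B l j * f k l m = \sum_n g i j n * B m n.

Lemma cb_relP f B g : B \in unitmx -> cb_rel f B g -> cb f B = g.
Proof.
move=> uB fBg; apply: sconst_ext => i j n; rewrite /cb exchange_big3.
transitivity (\sum_m (\sum_k \sum_l B k i * B l j * f k l m) * invmx B n m).
  apply: eq_bigr => m _; rewrite mulr_suml; apply: eq_bigr => k _.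
  by rewrite mulr_suml.
under eq_bigr => m _ do rewrite fBg mulr_suml.
rewrite exchange_big /= -[RHS](sum_mul_eql (g i j)).
apply: eq_bigr => p _; rewrite -(sum_mulVmx _ _ uB) mulr_sumr.
by apply: eq_bigr => m _; ring.
Qed.

Lemma cb_rel_cb f A : A \in unitmx -> cb_rel f A (cb f A).
Proof.
move=> uA i j m.
rewrite -[LHS](sum_mul_eql (fun p => \sum_k \sum_l A k i * A l j * f k l p)).
under eq_bigr => p _ do rewrite -(sum_mulmxV _ _ uA).
rewrite /cb; do 3 (rewrite ?sum3 /=); ring.
Qed.

Lemma cb_rel_mul f g h A B : cb_rel f A g -> cb_rel g B h -> cb_rel f (A *m B) h.
Proof.
move=> fAg gBh i j m.
transitivity (\sum_p \sum_q B p i * B q j * (\sum_k \sum_l A k p * A l q * f k l m)).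
  expand_sums; ring.
under eq_bigr => p _ do under eq_bigr => q _ do rewrite fAg.
transitivity (\sum_r A m r * (\sum_p \sum_q B p i * B q j * g p q r)).
  do 3 (rewrite ?sum3 /=); ring.
under eq_bigr => r _ do rewrite gBh.
expand_sums; ring.
Qed.

Lemma cb_mul f A B : A \in unitmx -> B \in unitmx -> cb (cb f A) B = cb f (A *m B).
Proof.
move=> uA uB; symmetry; apply: cb_relP; first by rewrite unitmx_mul uA.
exact: cb_rel_mul (cb_rel_cb f uA) (cb_rel_cb _ uB).
Qed.

Lemma cb1 f : cb f 1%:M = f.
Proof.
apply: sconst_ext; apply: forall_ord3; apply: forall_ord3; apply: forall_ord3;
by rewrite /cb invmx1; expand_sums; ring.
Qed.

Lemma mt_iso_refl f tf : mt_iso f tf f tf.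
Proof. by exists 1%:M; rewrite unitmx1 invmx1 trmx1 !cb1. Qed.

Lemma mt_iso_trans f tf g tg h th :
  mt_iso f tf g tg -> mt_iso g tg h th -> mt_iso f tf h th.
Proof.
move=> [A [uA [<- <-]]] [B [uB [<- <-]]].
have uAB : A *m B \in unitmx by rewrite unitmx_mul uA.
exists (A *m B); split=> //; split; first by rewrite cb_mul.
have -> : invmx (A *m B) = invmx B *m invmx A.
  have ABV : A *m B *m (invmx B *m invmx A) = 1%:M by rewrite mulmxA mulmxK // mulmxV.
  by rewrite -[LHS]mulmx1 -ABV mulmxA mulVmx // mul1mx.
by rewrite trmx_mul cb_mul // unitmx_tr unitmx_inv.
Qed.

Lemma dform_ad_invariant f tf :
  (forall i j k, f i j k = - f j i k) -> (forall i j k, tf i j k = - tf j i k) ->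
  ad_invariant (dconst f tf) (@dform R).
Proof.
move=> f_anti tf_anti a b d.
case: a => a; case: b => b; case: d => d; rewrite !big_sumType /=.
all: rewrite ?sum_mul_eqr ?sum_mul_eql ?sum_eql_mul.
all: rewrite -?mulr_suml -?mulr_sumr ?mulr0 ?mul0r ?addr0 ?add0r //.
all: by rewrite (f_anti, tf_anti) ?opprK.
Qed.

Lemma manin_of_is_lie f tf : is_lie (dconst f tf) -> manin f tf.
Proof.
move=> lie_ftf; split=> //; have [_ [anti _]] := lie_ftf.
apply: dform_ad_invariant => i j k.
  exact: (anti (inl i) (inl j) (inl k)).
exact: (anti (inr i) (inr j) (inr k)).
Qed.

End MtIso.

Section Invariants.
Variable R : realType.
Implicit Types (f g tf tg : sconst R) (A D : 'M[R]_3).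

Definition trace_vec tf : 'cV[R]_3 := \col_j \tr (\matrix_(c, d) tf c j d).

Definition ad_mx f a : 'M[R]_3 := \matrix_(c, d) f a c d.

Definition killing f : 'M[R]_3 := \matrix_(a, b) \tr (ad_mx f a *m ad_mx f b).

Definition killing_quad f (t : 'cV[R]_3) : R := (t^T *m killing f *m t) 0 0.

Lemma mxtrace_conj_tr A (M : 'M[R]_3) : A \in unitmx ->
  \tr (A^T *m M *m (invmx A)^T) = \tr M.
Proof. by move=> uA; rewrite mxtrace_mulC mulmxA -trmx_mul mulmxV // trmx1 mul1mx. Qed.

Lemma trace_vec_cb tf D : D \in unitmx -> trace_vec (cb tf D) = D^T *m trace_vec tf.
Proof.
move=> uD; apply/matrixP => j z; rewrite !mxE.
have -> : \matrix_(c, d) cb tf D c j d =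
    D^T *m (\matrix_(x, y) \sum_l D l j * tf x l y) *m (invmx D)^T.
  by apply/matrixP => c d; rewrite /cb !mxE; expand_sums; ring.
by rewrite mxtrace_conj_tr //; expand_sums; ring.
Qed.

Lemma killing_cb f A : A \in unitmx -> killing (cb f A) = A^T *m killing f *m A.
Proof.
move=> uA; apply/matrixP => i j; rewrite !mxE.
pose M i := \matrix_(x, y) \sum_k A k i * f k x y.
have adE i' : ad_mx (cb f A) i' = A^T *m M i' *m (invmx A)^T.
  by apply/matrixP => c d; rewrite /ad_mx /cb !mxE; expand_sums; ring.
have -> : ad_mx (cb f A) i *m ad_mx (cb f A) j = A^T *m (M i *m M j) *m (invmx A)^T.
  by rewrite !adE !mulmxA -[_ *m (invmx A)^T *m A^T]mulmxA -trmx_mul mulmxV // trmx1 mulmx1.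
by rewrite mxtrace_conj_tr // /M; expand_sums; ring.
Qed.

Lemma mt_iso_killing_quad f tf g tg : mt_iso f tf g tg ->
  killing_quad f (trace_vec tf) = killing_quad g (trace_vec tg).
Proof.
move=> [A [uA [<- <-]]].
have uAT : (invmx A)^T \in unitmx by rewrite unitmx_tr unitmx_inv.
rewrite /killing_quad trace_vec_cb // killing_cb // trmxK trmx_mul !mulmxA.
by rewrite -[_ *m (invmx A)^T *m A^T]mulmxA -trmx_mul mulmxV // trmx1 mulmx1 mulmxK.
Qed.

Lemma mt_iso_trace_vec_eq0 f tf g tg : mt_iso f tf g tg ->
  (trace_vec tf == 0) = (trace_vec tg == 0).
Proof.
move=> [A [uA [_ <-]]].
have uAT : (invmx A)^T \in unitmx by rewrite unitmx_tr unitmx_inv.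
rewrite trace_vec_cb // trmxK; apply/eqP/eqP => [-> | t0]; first by rewrite mulmx0.
by rewrite -[trace_vec tf](mulKVmx uA) t0 mulmx0.
Qed.

End Invariants.

Section Sl2Duals.
Variable R : realType.
Implicit Types (tf : sconst R) (t : 'cV[R]_3).

Definition cv3 (x y z : R) : 'cV[R]_3 := \col_i vec3 x y z i.

Definition sl2_dual t : sconst R :=
  br3 (vec3 (t i1 0 / 2) (- t i0 0 / 2) 0) (vec3 0 (t i2 0 / 2) (- t i1 0 / 2))
      (vec3 (- t i2 0 / 2) 0 (t i0 0 / 2)).

(* The Jacobi identities for [X_i, X_j, X^k] projected on [X_l] are linear in
   [tf], and six of them already pin [tf] down to its trace vector. *)
Lemma sl2_dual_trace_vec tf : is_lie (dconst (sl2 R) tf) -> tf = sl2_dual (trace_vec tf).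
Proof.
move=> [diag [anti jacobi]].
have tf_diag i k : tf i i k = 0 by exact: (diag (inr i) (inr k)).
have tf_anti i j k : tf i j k = - tf j i k by exact: (anti (inr i) (inr j) (inr k)).
have J i j k l := jacobi (inl i) (inl j) (inr k) (inl l).
move: (J i0 i1 i0 i2) (J i0 i1 i1 i2) (J i0 i2 i1 i2).
move: (J i0 i1 i0 i1) (J i0 i2 i0 i2) (J i1 i2 i1 i2).
rewrite !big_sumType /= !sum3 /sl2 /br3 /vec3 /=.
rewrite !tf_diag !(tf_anti i1 i0) !(tf_anti i2 i1) !(tf_anti i0 i2) => J4 J5 J6 J1 J2 J3.
apply: sconst_ext; apply: forall_ord3; apply: forall_ord3; apply: forall_ord3;
rewrite /sl2_dual /trace_vec; expand_sums; rewrite /br3 /vec3 /=;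
rewrite ?tf_diag ?(tf_anti i1 i0) ?(tf_anti i2 i1) ?(tf_anti i0 i2); lra.
Qed.

Lemma trace_vec_sl2_dual t : trace_vec (sl2_dual t) = t.
Proof.
apply/matrixP => i z; rewrite (ord1 z); move: i; apply: forall_ord3;
by rewrite /trace_vec /sl2_dual; expand_sums; rewrite /br3 /vec3 /=; field.
Qed.

Lemma killing_quad_sl2 x y z :
  killing_quad (sl2 R) (cv3 x y z) = 2 * (x ^+ 2 + y ^+ 2 - z ^+ 2).
Proof.
by rewrite /killing_quad /killing /ad_mx; expand_sums; rewrite /sl2 /br3 /vec3 /=; ring.
Qed.

Definition normal_trace t :=
  [\/ t = cv3 0 0 0, exists2 b, 0 < b & t = cv3 (2 * b) 0 0,
      exists2 b, 0 < b & t = cv3 0 0 (2 * b) | t = cv3 (-2) 0 2].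

Lemma listedE tf : listed tf <-> exists2 t, normal_trace t & tf = sl2_dual t.
Proof.
have dualE x y z : sl2_dual (cv3 x y z) =
    br3 (vec3 (y / 2) (- x / 2) 0) (vec3 0 (z / 2) (- y / 2)) (vec3 (- z / 2) 0 (x / 2)).
  by rewrite /sl2_dual !mxE.
have dualI : sl2_dual (cv3 0 0 0) = tfI R.
  by rewrite dualE /tfI; congr br3; congr vec3; field.
have dualVi b : sl2_dual (cv3 (2 * b) 0 0) = tfVi b.
  by rewrite dualE /tfVi; congr br3; congr vec3; field.
have dualVii b : sl2_dual (cv3 0 0 (2 * b)) = tfVii b.
  by rewrite dualE /tfVii; congr br3; congr vec3; field.
have dualViii : sl2_dual (cv3 (-2) 0 2) = tfViii R.
  by rewrite dualE /tfViii; congr br3; congr vec3; field.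
split=> [[->|[[b [b0 ->]]|[[b [b0 ->]]| ->]]] | [t [->|[b b0 ->]|[b b0 ->]| ->] ->]].
- by exists (cv3 0 0 0); [apply: Or41 | rewrite dualI].
- by exists (cv3 (2 * b) 0 0); [apply: Or42; exists b | rewrite dualVi].
- by exists (cv3 0 0 (2 * b)); [apply: Or43; exists b | rewrite dualVii].
- by exists (cv3 (-2) 0 2); [apply: Or44 | rewrite dualViii].
- by rewrite dualI; left.
- by rewrite dualVi; right; left; exists b.
- by rewrite dualVii; right; right; left; exists b.
- by rewrite dualViii; right; right; right.
Qed.

Lemma normal_trace_inj t t' : normal_trace t -> normal_trace t' ->
  killing_quad (sl2 R) t = killing_quad (sl2 R) t' -> (t == 0) = (t' == 0) -> t = t'.
Proof.
have null_nonzero : (cv3 0 0 0 == 0) != (cv3 (-2) 0 2 == 0).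
  have -> : cv3 0 0 0 = 0.
    by apply/matrixP => i j; rewrite !mxE /vec3; case: (val i) => [|[|]].
  have /negbTE-> : cv3 (-2) 0 2 != 0.
    by apply/eqP => /(congr1 (fun u : 'cV[R]_3 => u i0 0)); rewrite !mxE /vec3 /= => h; lra.
  by rewrite eqxx.
case=> [->|[b b0 ->]|[b b0 ->]| ->]; case=> [->|[c c0 ->]|[c c0 ->]| ->];
rewrite !killing_quad_sl2 => Q Z //.
all: try by have -> : b = c by nra.
all: try by exfalso; nra.
all: by move: null_nonzero; rewrite Z eqxx.
Qed.

End Sl2Duals.

Section Sl2Orbits.
Variable R : realType.
Implicit Types (tf : sconst R) (t : 'cV[R]_3) (a b r x y z : R).

Definition mx3 (a b c d e f g h k : R) : 'M[R]_3 :=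
  \matrix_(i, j) vec3 (vec3 a b c j) (vec3 d e f j) (vec3 g h k j) i.

Lemma mx3_mul_cv3 a b c d e f g h k x y z :
  mx3 a b c d e f g h k *m cv3 x y z =
  cv3 (a * x + b * y + c * z) (d * x + e * y + f * z) (g * x + h * y + k * z).
Proof.
apply/matrixP => i j; rewrite (ord1 j); move: i; apply: forall_ord3;
by expand_sums; rewrite /vec3 /=.
Qed.

Definition trace_reach t t' :=
  forall tf, is_lie (dconst (sl2 R) tf) -> trace_vec tf = t ->
  exists2 tf', mt_iso (sl2 R) tf (sl2 R) tf' & trace_vec tf' = t'.

Lemma trace_reach_refl t : trace_reach t t.
Proof. by move=> tf _ <-; exists tf => //; apply: mt_iso_refl. Qed.

Lemma trace_reach_trans t1 t2 t3 :
  trace_reach t1 t2 -> trace_reach t2 t3 -> trace_reach t1 t3.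
Proof.
move=> r12 r23 tf lie_tf tr1; have [tf2 iso2 tr2] := r12 tf lie_tf tr1.
have [tf3 iso3 tr3] := r23 tf2 (manin_iso_is_lie iso2 lie_tf) tr2.
by exists tf3 => //; apply: mt_iso_trans iso2 iso3.
Qed.

Lemma trace_reach_aut B C t : B *m C = 1%:M -> cb_rel (sl2 R) B (sl2 R) ->
  trace_reach t (C *m t).
Proof.
move=> BC autB tf _ <-; have [uB _] := mulmx1_unit BC.
have invB : invmx B = C by rewrite -[invmx B]mulmx1 -BC mulmxA mulVmx // mul1mx.
exists (cb tf (invmx B)^T); first by exists B; split=> //; split=> //; apply: cb_relP.
by rewrite trace_vec_cb ?unitmx_tr ?unitmx_inv // trmxK invB.
Qed.

Lemma trace_reach_rot c s x y z : c ^+ 2 + s ^+ 2 = 1 ->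
  trace_reach (cv3 x y z) (cv3 (c * x + s * y) (c * y - s * x) z).
Proof.
move=> cs1; have -> : cv3 (c * x + s * y) (c * y - s * x) z =
    mx3 c s 0 (- s) c 0 0 0 1 *m cv3 x y z by rewrite mx3_mul_cv3; congr cv3; ring.
apply: (@trace_reach_aut (mx3 c (- s) 0 s c 0 0 0 1)).
  by apply/matrixP; apply: forall_ord3; apply: forall_ord3; expand_sums;
    rewrite /vec3 /=; nra.
by apply: forall_ord3; apply: forall_ord3; apply: forall_ord3; expand_sums;
  rewrite /sl2 /br3 /vec3 /=; nra.
Qed.

Lemma trace_reach_boost c s x y z : c ^+ 2 - s ^+ 2 = 1 ->
  trace_reach (cv3 x y z) (cv3 (c * x - s * z) y (c * z - s * x)).
Proof.
move=> cs1; have -> : cv3 (c * x - s * z) y (c * z - s * x) =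
    mx3 c 0 (- s) 0 1 0 (- s) 0 c *m cv3 x y z by rewrite mx3_mul_cv3; congr cv3; ring.
apply: (@trace_reach_aut (mx3 c 0 s 0 1 0 s 0 c)).
  by apply/matrixP; apply: forall_ord3; apply: forall_ord3; expand_sums;
    rewrite /vec3 /=; nra.
by apply: forall_ord3; apply: forall_ord3; apply: forall_ord3; expand_sums;
  rewrite /sl2 /br3 /vec3 /=; nra.
Qed.

Lemma trace_reach_flip x y z : trace_reach (cv3 x y z) (cv3 x (- y) (- z)).
Proof.
have -> : cv3 x (- y) (- z) = mx3 1 0 0 0 (-1) 0 0 0 (-1) *m cv3 x y z.
  by rewrite mx3_mul_cv3; congr cv3; ring.
apply: (@trace_reach_aut (mx3 1 0 0 0 (-1) 0 0 0 (-1))).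
  by apply/matrixP; apply: forall_ord3; apply: forall_ord3; expand_sums;
    rewrite /vec3 /=; ring.
by apply: forall_ord3; apply: forall_ord3; apply: forall_ord3; expand_sums;
  rewrite /sl2 /br3 /vec3 /=; ring.
Qed.

Lemma trace_reach_plane x y z :
  trace_reach (cv3 x y z) (cv3 (Num.sqrt (x ^+ 2 + y ^+ 2)) 0 `|z|).
Proof.
set r := Num.sqrt _.
have r2 : r ^+ 2 = x ^+ 2 + y ^+ 2 by rewrite sqr_sqrtr // addr_ge0 // sqr_ge0.
have [c [s [cs1 rot_x rot_y]]] : exists c s,
    [/\ c ^+ 2 + s ^+ 2 = 1, c * x + s * y = r & c * y - s * x = 0].
  have [r0|r_neq0] := eqVneq r 0.
    have : x ^+ 2 + y ^+ 2 == 0 by rewrite -r2 r0 expr0n.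
    rewrite paddr_eq0 ?sqr_ge0 // !sqrf_eq0 => /andP[/eqP-> /eqP->].
    by exists 1, 0; rewrite r0; split; ring.
  exists (x / r), (y / r); split; last by field.
    by rewrite !expr_div_n -mulrDl -r2 divff // expf_neq0.
  by rewrite [x / r * x]mulrAC [y / r * y]mulrAC -mulrDl -!expr2 -r2 expr2 mulfK.
apply: trace_reach_trans (trace_reach_rot cs1) _; rewrite rot_x rot_y.
have [z0|z_neg] := leP 0 z; first by rewrite ger0_norm //; apply: trace_reach_refl.
rewrite ltr0_norm //; have := trace_reach_flip (x := r) (y := 0) (z := z).
by rewrite oppr0; apply.
Qed.

Lemma hyperbolic_unit a b : `|b| < a ->
  let m := Num.sqrt (a ^+ 2 - b ^+ 2) in
  [/\ 0 < m, (a / m) ^+ 2 - (b / m) ^+ 2 = 1 & a / m * a - b / m * b = m].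
Proof.
move=> ba m; have ab2 : 0 < a ^+ 2 - b ^+ 2.
  by rewrite subr_gt0 -real_normK ?num_real // ltr_pXn2r ?nnegrE // (le_trans _ (ltW ba)).
have m2 : m ^+ 2 = a ^+ 2 - b ^+ 2 by rewrite sqr_sqrtr // ltW.
have m0 : 0 < m by rewrite sqrtr_gt0.
have m_neq0 : m != 0 by rewrite gt_eqF.
split=> //; first by rewrite !expr_div_n -mulrBl -m2 divff // expf_neq0.
by rewrite [a / m * a]mulrAC [b / m * b]mulrAC -mulrBl -!expr2 -m2 expr2 mulfK.
Qed.

Lemma trace_reach_spacelike r z : 0 <= z < r ->
  trace_reach (cv3 r 0 z) (cv3 (Num.sqrt (r ^+ 2 - z ^+ 2)) 0 0).
Proof.
case/andP=> z0 zr; have zr' : `|z| < r by rewrite ger0_norm.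
have [m0 cs1 E] := hyperbolic_unit zr'.
have := trace_reach_boost (x := r) (y := 0) (z := z) cs1.
by rewrite E (_ : r / _ * z - z / _ * r = 0) //; ring.
Qed.

Lemma trace_reach_timelike r z : 0 <= r < z ->
  trace_reach (cv3 r 0 z) (cv3 0 0 (Num.sqrt (z ^+ 2 - r ^+ 2))).
Proof.
case/andP=> r0 rz; have rz' : `|r| < z by rewrite ger0_norm.
have [m0 cs1 E] := hyperbolic_unit rz'.
have := trace_reach_boost (x := r) (y := 0) (z := z) cs1.
by rewrite E (_ : z / _ * r - r / _ * z = 0) //; ring.
Qed.

Lemma trace_reach_null r : 0 < r -> trace_reach (cv3 r 0 r) (cv3 (-2) 0 2).
Proof.
move=> r0; have r_neq0 : r != 0 by rewrite gt_eqF.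
(* The boost with parameter [l] scales the null vector [(r, 0, r)] by [1 / l]. *)
pose l := r / 2.
have cs1 : ((l + l^-1) / 2) ^+ 2 - ((l - l^-1) / 2) ^+ 2 = 1 by rewrite /l; field.
apply: trace_reach_trans (trace_reach_boost (x := r) (y := 0) (z := r) cs1) _.
have pi_rot : (-1) ^+ 2 + 0 ^+ 2 = 1 :> R by ring.
have := trace_reach_rot (x := 2) (y := 0) (z := 2) pi_rot.
rewrite (_ : (l + l^-1) / 2 * r - (l - l^-1) / 2 * r = 2); last by rewrite /l; field.
by rewrite mulN1r !(mul0r, mulr0) addr0 subr0.
Qed.

End Sl2Orbits.

Section Sl2Classification.
Variable R : realType.
Implicit Types (f tf : sconst R) (t : 'cV[R]_3).

Lemma trace_reach_normal_form t : exists2 t0, normal_trace t0 & trace_reach t t0.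
Proof.
have -> : t = cv3 (t i0 0) (t i1 0) (t i2 0).
  by apply/matrixP => i j; rewrite (ord1 j); move: i; apply: forall_ord3; rewrite mxE.
move: (t i0 0) (t i1 0) (t i2 0) => x y z.
suff [t0 nt0 reach0] : exists2 t0, normal_trace t0 &
    trace_reach (cv3 (Num.sqrt (x ^+ 2 + y ^+ 2)) 0 `|z|) t0.
  by exists t0 => //; apply: trace_reach_trans reach0; apply: trace_reach_plane.
have := sqrtr_ge0 (x ^+ 2 + y ^+ 2); have := normr_ge0 z.
move: (Num.sqrt _) `|z| => r {}z z0 r0.
have normal_x m : 0 < m -> normal_trace (cv3 m 0 0).
  by move=> m0; apply: Or42; exists (m / 2); rewrite ?divr_gt0 //; congr cv3; field.
have normal_z m : 0 < m -> normal_trace (cv3 0 0 m).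
  by move=> m0; apply: Or43; exists (m / 2); rewrite ?divr_gt0 //; congr cv3; field.
case: (ltgtP z r) => [zr | rz | <-].
- exists (cv3 (Num.sqrt (r ^+ 2 - z ^+ 2)) 0 0).
    by apply: normal_x; rewrite sqrtr_gt0 subr_gt0 ltr_pXn2r ?nnegrE.
  by apply: trace_reach_spacelike; rewrite z0.
- exists (cv3 0 0 (Num.sqrt (z ^+ 2 - r ^+ 2))).
    by apply: normal_z; rewrite sqrtr_gt0 subr_gt0 ltr_pXn2r ?nnegrE.
  by apply: trace_reach_timelike; rewrite r0.
- have [-> | z_neq0] := eqVneq z 0.
    by exists (cv3 0 0 0); [apply: Or41 | apply: trace_reach_refl].
  by exists (cv3 (-2) 0 2); [apply: Or44 | apply: trace_reach_null; rewrite lt_def z_neq0].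
Qed.

Lemma sl2_lie_dual_listed tf : is_lie (dconst (sl2 R) tf) ->
  exists2 tf0, listed tf0 & mt_iso (sl2 R) tf (sl2 R) tf0.
Proof.
move=> lie_tf; have [t0 nt0 reach0] := trace_reach_normal_form (trace_vec tf).
have [tf0 iso0 tr0] := reach0 tf lie_tf erefl.
exists tf0 => //; apply/listedE; exists t0 => //.
by rewrite -tr0; apply: sl2_dual_trace_vec (manin_iso_is_lie iso0 lie_tf).
Qed.

Lemma listed_mt_iso_uniq f tf tf0 tf1 : listed tf0 -> listed tf1 ->
  mt_iso f tf (sl2 R) tf0 -> mt_iso f tf (sl2 R) tf1 -> tf1 = tf0.
Proof.
move=> /listedE[t0 nt0 ->] /listedE[t1 nt1 ->] iso0 iso1.
have q0 := mt_iso_killing_quad iso0; have q1 := mt_iso_killing_quad iso1.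
have z0 := mt_iso_trace_vec_eq0 iso0; have z1 := mt_iso_trace_vec_eq0 iso1.
rewrite !trace_vec_sl2_dual in q0 q1 z0 z1.
by congr sl2_dual; apply: normal_trace_inj => //; [rewrite -q1 q0 | rewrite -z1 z0].
Qed.

End Sl2Classification.

Theorem mainTheorem2 (R : realType) (f tf : sconst R) :
  manin f tf -> lie_iso f (sl2 R) ->
  exists tf0 : sconst R,
    [/\ listed tf0, manin (sl2 R) tf0, mt_iso f tf (sl2 R) tf0 &
        forall tf1 : sconst R, listed tf1 -> mt_iso f tf (sl2 R) tf1 ->
          tf1 = tf0].
Proof.
move=> [lie_ftf _] [A [uA fA]].
have iso_sl2 : mt_iso f tf (sl2 R) (cb tf (invmx A)^T) by exists A.
have [tf0 listed0 iso0] := sl2_lie_dual_listed (manin_iso_is_lie iso_sl2 lie_ftf).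
have iso := mt_iso_trans iso_sl2 iso0.
exists tf0; split=> //; first exact: manin_of_is_lie (manin_iso_is_lie iso lie_ftf).
by move=> tf1 listed1 iso1; apply: listed_mt_iso_uniq iso iso1.
Qed.
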